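(* For every tree $T\subseteq\mathbb{N}^{<\mathbb{N}}$, $[\mathcal{JT}(T)]=\{\mathcal{J}(Z):Z\in[T]\}$.
   Context: A tree is a subset of $\mathbb{N}^{<\mathbb{N}}$ closed under initial segments; $[T]$ is the set of infinite paths through $T$. Strings are coded by natural numbers via a fixed computable coding with $\sigma\subsetneq\tau$ implying code$(\sigma)<$ code$(\tau)$. For $\sigma$ finite or infinite, $\{e\}^\sigma_t(n)\downarrow$ means the $e$-th machine on input $n$ with oracle $\sigma$ halts in fewer than $\min(|\sigma|,t)$ steps. For $Z\in\mathbb{N}^\mathbb{N}$: $t_{-1}=1$, $t_n=\max\{t_{n-1}+1,\mu t(\{n\}^Z_t(n)\downarrow)\}$ ($t_n=t_{n-1}+1$ if no such $t$), and $\mathcal{J}(Z)(n)=Z\restriction t_n$. For finite $\sigma$: $t_{-1}=1$, $t_n=\max\{t_{n-1}+1,\mu t(\{n\}^{\sigma\restriction t}(n)\downarrow)\}$ (halting within $|\sigma\restriction t|$ steps; $t_n=t_{n-1}+1$ if no such $t$), and $J(\sigma)=\langle\sigma\restriction t_0,\dots,\sigma\restriction t_{k-1}\rangle$ with $k$ least such that $t_k>|\sigma|$. $\mathcal{JT}(T)=\{J(\sigma):\sigma\in T\}$. *)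

From Stdlib Require Import ClassicalEpsilon.
From mathcomp Require Import all_boot.

Set Implicit Arguments.
Unset Strict Implicit.
Unset Printing Implicit Defensive.

Definition restr (Z : nat -> nat) (t : nat) : seq nat := mkseq Z t.

Definition is_tree (T : seq nat -> Prop) : Prop :=
  forall (s : seq nat) (n : nat), T s -> T (take n s).

Definition paths (S : seq nat -> Prop) : (nat -> nat) -> Prop :=
  fun X => forall k, S (restr X k).

Definition sprefix (s t : seq nat) : bool := prefix s t && (s != t).

Definition mu_opt (P : pred nat) : option nat :=
  match excluded_middle_informative (exists t, P t) with
  | left h => Some (ex_minn h)
  | right _ => None
  end.

Definition tstep (P : pred nat) (prev : nat) : nat :=
  match mu_opt P with
  | Some m => maxn prev.+1 m
  | None => prev.+1
  end.

Section Jumps.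
(* The machine model, as explicit parameters:
   [hf e s k n] : the e-th oracle machine with FINITE oracle s on input n
                  halts in fewer than k steps;
   [hz e Z k n] : the e-th oracle machine with INFINITE oracle Z on input n
                  halts in fewer than k steps.
   [code]       : the fixed coding of strings by natural numbers. *)
Variable hf : nat -> seq nat -> nat -> nat -> bool.
Variable hz : nat -> (nat -> nat) -> nat -> nat -> bool.
Variable code : seq nat -> nat.

(* {e}^sigma_t(n)|  : halts in fewer than min(|sigma|, t) steps. *)
Definition convF (e : nat) (s : seq nat) (t n : nat) : bool :=
  hf e s (minn (size s) t) n.
(* for infinite Z, min(|Z|, t) = t *)
Definition convZ (e : nat) (Z : nat -> nat) (t n : nat) : bool :=
  hz e Z t n.

(* t_n for an infinite Z; index n here is the paper's t_n, with t_{-1} = 1. *)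
Fixpoint tZ (Z : nat -> nat) (n : nat) : nat :=
  match n with
  | 0 => tstep (fun t => convZ 0 Z t 0) 1
  | m.+1 => tstep (fun t => convZ m.+1 Z t m.+1) (tZ Z m)
  end.

Definition calJ (Z : nat -> nat) : nat -> nat :=
  fun n => code (restr Z (tZ Z n)).

(* t_n for a finite sigma: the oracle is sigma |` t, halting within
   |sigma |` t| = min(|sigma |` t|, t) steps. *)
Fixpoint tS (s : seq nat) (n : nat) : nat :=
  match n with
  | 0 => tstep (fun t => convF 0 (take t s) t 0) 1
  | m.+1 => tstep (fun t => convF m.+1 (take t s) t m.+1) (tS s m)
  end.

(* k = least k with t_k > |sigma|.  Since t_n >= n + 2, such k is <= |sigma|,
   so a bounded search over 0..|sigma| finds the least one. *)
Definition Jlen (s : seq nat) : nat :=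
  find (fun k => size s < tS s k) (iota 0 (size s).+1).

Definition Jfin (s : seq nat) : seq nat :=
  [seq code (take (tS s i) s) | i <- iota 0 (Jlen s)].

Definition JT (T : seq nat -> Prop) : seq nat -> Prop :=
  fun u => exists s, T s /\ u = Jfin s.

End Jumps.

Lemma tS_gt (hf : nat -> seq nat -> nat -> nat -> bool) (s : seq nat) (n : nat) : n.+1 < @tS hf s n.
Proof.
elim: n => [|n IH] /=; rewrite /tstep; case: mu_opt => [m|] //=.
all: by rewrite ?leq_max ?ltnS ?IH.
Qed.

(** The values t_n computed from a finite string sigma agree with
    those computed from an infinite Z as soon as sigma and Z agree up to a
    length L beyond which neither computation looks, i.e. every halting
    search that succeeds at all already succeeds below L.  Hence
    J(Z |` t_k) = J(Z) |` (k+1), giving the inclusion from right to left.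
    Conversely, if every J(Z) |` k is some J(sigma_k) with sigma_k in T,
    injectivity of the coding forces the pieces sigma_k |` t_n (n < k) to be
    independent of k; they form a chain of strings whose limit Z lies on [T],
    and comparing Z with sigma_j for j large shows J(Z) = X. *)
From mathcomp Require Import all_boot.
From Stdlib Require Import ClassicalEpsilon FunctionalExtensionality.

Set Implicit Arguments.
Unset Strict Implicit.
Unset Printing Implicit Defensive.

Definition witnessed_below (P : pred nat) (L : nat) : Prop :=
  forall t, P t -> exists2 u, u <= L & P u.

Lemma witnessed_below_le (P : pred nat) L L' :
  L <= L' -> witnessed_below P L -> witnessed_below P L'.
Proof. move=> le_LL' wP t /wP[u uL Pu]; exists u => //; exact: leq_trans le_LL'. Qed.

Variant mu_opt_spec (P : pred nat) : option nat -> Prop :=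
  | MuOptSome m of P m & (forall t, P t -> m <= t) : mu_opt_spec P (Some m)
  | MuOptNone of (forall t, ~~ P t) : mu_opt_spec P None.

Lemma mu_optP (P : pred nat) : mu_opt_spec P (mu_opt P).
Proof.
rewrite /mu_opt; case: excluded_middle_informative => [ex_P|no_P].
  by case: ex_minnP => m; constructor.
by constructor=> t; apply/negP => Pt; apply: no_P; exists t.
Qed.

Lemma mu_opt_eq (P Q : pred nat) L :
  (forall t, t <= L -> P t = Q t) -> witnessed_below P L -> witnessed_below Q L ->
  mu_opt P = mu_opt Q.
Proof.
move=> eqPQ wP wQ.
case: mu_optP => [m Pm minP|noP]; case: mu_optP => [m' Qm' minQ|noQ] //.
- have [u uL /minP mu] := wP _ Pm; have [u' u'L /minQ m'u'] := wQ _ Qm'.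
  have mL := leq_trans mu uL; have m'L := leq_trans m'u' u'L.
  congr Some; apply/eqP; rewrite eqn_leq.
  by rewrite minP ?minQ // ?eqPQ // -eqPQ.
- by have [u uL Pu] := wP _ Pm; move: (noQ u); rewrite -eqPQ // Pu.
- by have [u uL Qu] := wQ _ Qm'; move: (noP u); rewrite eqPQ // Qu.
Qed.

Lemma tstep_witnessed (P : pred nat) a : witnessed_below P (tstep P a).
Proof.
move=> t Pt; rewrite /tstep; case: mu_optP => [m Pm _|noP].
  by exists m; rewrite // leq_max leqnn orbT.
by move: (noP t); rewrite Pt.
Qed.

Fixpoint titer (P : nat -> pred nat) (n : nat) : nat :=
  tstep (P n) (if n is m.+1 then titer P m else 1).

Lemma titer_step (P : nat -> pred nat) n :
  titer P n = tstep (P n) (if n is m.+1 then titer P m else 1).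
Proof. by case: n. Qed.

Lemma titer_lt (P : nat -> pred nat) : {homo titer P : m n / m < n}.
Proof.
apply: homo_ltn ltn_trans _ => n.
by rewrite [titer P n.+1]titer_step /tstep; case: mu_opt => [m|] //; rewrite leq_max leqnn.
Qed.

Lemma titer_mono (P : nat -> pred nat) : {homo titer P : m n / m <= n}.
Proof. exact/ltnW_homo/titer_lt. Qed.

Lemma titer_witnessed (P : nat -> pred nat) i n :
  i <= n -> witnessed_below (P i) (titer P n).
Proof.
move=> le_in; apply: witnessed_below_le (titer_mono P le_in) _.
rewrite titer_step; exact: tstep_witnessed.
Qed.

Lemma titer_eq (P Q : nat -> pred nat) n :
  (forall i, i <= n -> mu_opt (P i) = mu_opt (Q i)) -> titer P n = titer Q n.
Proof.
elim: n => [|n IH] eqPQ /=; rewrite /tstep eqPQ //.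
by rewrite IH // => i le_in; apply/eqPQ/ltnW.
Qed.

Lemma take_restr (Z : nat -> nat) t L : take t (restr Z L) = restr Z (minn t L).
Proof. by rewrite /restr /mkseq -map_take take_iota. Qed.

Section LimitOfChain.

Variable chain : nat -> seq nat.
Hypothesis chain_prefix : forall m n, m <= n -> prefix (chain m) (chain n).
Hypothesis chain_size : forall n, n < size (chain n).

Definition chain_limit (i : nat) : nat := nth 0 (chain i) i.

Lemma nth_chain m n i :
  m <= n -> i < size (chain m) -> nth 0 (chain m) i = nth 0 (chain n) i.
Proof.
move=> le_mn i_lt; have := chain_prefix le_mn; rewrite prefixE => /eqP <-.
by rewrite nth_take.
Qed.

Lemma restr_chain_limit n L : L <= size (chain n) -> restr chain_limit L = take L (chain n).
Proof.
move=> L_le; apply: (@eq_from_nth _ 0); first by rewrite size_mkseq size_takel.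
rewrite size_mkseq => i iL; rewrite nth_mkseq // nth_take // /chain_limit.
case: (leqP i n) => [le_in|lt_ni]; first exact/nth_chain/chain_size.
by rewrite (@nth_chain n i) ?(ltnW lt_ni) ?(leq_trans iL).
Qed.

End LimitOfChain.

Section Jumps.

Variable hf : nat -> seq nat -> nat -> nat -> bool.
Variable hz : nat -> (nat -> nat) -> nat -> nat -> bool.
Variable code : seq nat -> nat.

Definition haltS (s : seq nat) (n : nat) : pred nat :=
  fun t => convF hf n (take t s) t n.
Definition haltZ (Z : nat -> nat) (n : nat) : pred nat :=
  fun t => convZ hz n Z t n.

Lemma tS_titer s n : tS hf s n = titer (haltS s) n.
Proof. by elim: n => //= n ->. Qed.

Lemma tZ_titer Z n : tZ hz Z n = titer (haltZ Z) n.
Proof. by elim: n => //= n ->. Qed.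

Lemma tS_lt s : {homo tS hf s : m n / m < n}.
Proof. by move=> m n lt_mn; rewrite !tS_titer; apply: titer_lt. Qed.

Lemma tS_mono s : {homo tS hf s : m n / m <= n}.
Proof. exact/ltnW_homo/tS_lt. Qed.

Lemma tZ_mono Z : {homo tZ hz Z : m n / m <= n}.
Proof. by move=> m n le_mn; rewrite !tZ_titer; apply: titer_mono. Qed.

Lemma haltS_witnessed s n : witnessed_below (haltS s n) (size s).
Proof.
move=> t Pt; exists (minn t (size s)); first exact: geq_minr.
move: Pt; case: leqP => // /ltnW st.
by rewrite /haltS /convF take_size (take_oversize st) minnn (minn_idPl st).
Qed.

Lemma size_Jfin s : size (Jfin hf code s) = Jlen hf s.
Proof. by rewrite size_map size_iota. Qed.

Lemma nth_Jfin s i : i < Jlen hf s -> nth 0 (Jfin hf code s) i = code (take (tS hf s i) s).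
Proof. by move=> lt_i; rewrite (nth_map 0) ?size_iota // nth_iota. Qed.

Lemma tS_le_size s i : i < Jlen hf s -> tS hf s i <= size s.
Proof.
rewrite /Jlen => lt_i; have := before_find 0 lt_i.
have i_le : i < (size s).+1.
  by apply: leq_trans lt_i _; rewrite -[X in _ <= X](size_iota 0) find_size.
by rewrite nth_iota // add0n ltnNge => /negbFE.
Qed.

Lemma JlenE s k :
  size s < tS hf s k -> (forall i, i < k -> tS hf s i <= size s) -> Jlen hf s = k.
Proof.
move=> lt_k le_i; have k_le : k <= size s.
  rewrite leqNgt; apply/negP => /le_i; apply/negP; rewrite -ltnNge.
  exact: ltnW (tS_gt hf s (size s)).
case: (ltngtP (Jlen hf s) k) => // [lt_f|gt_f].
- have lt_size : Jlen hf s < (size s).+1 := leq_trans lt_f (leqW k_le).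
  have has_p : has (fun k => size s < tS hf s k) (iota 0 (size s).+1).
    by rewrite has_find size_iota.
  have := nth_find 0 has_p; rewrite -/(Jlen hf s).
  by rewrite nth_iota // add0n ltnNge le_i.
- by have := before_find 0 gt_f; rewrite nth_iota // add0n lt_k.
Qed.

Lemma Jfin_nil : Jfin hf code [::] = [::].
Proof. by rewrite /Jfin (@JlenE [::] 0) //; apply: ltnW (tS_gt hf [::] 0). Qed.

Section UsePrinciple.

Hypothesis use_principle : forall (e : nat) (Z : nat -> nat) (k n : nat),
  hz e Z k n = hf e (restr Z k) k n.

Lemma haltS_haltZ s Z L n t :
  take L s = restr Z L -> t <= L -> haltS s n t = haltZ Z n t.
Proof.
move=> sZ tL; have stZ : take t s = restr Z t.
  by rewrite -(take_takel _ tL) sZ take_restr (minn_idPl tL).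
by rewrite /haltS /haltZ /convF /convZ use_principle stZ size_mkseq minnn.
Qed.

Lemma tS_eq_tZ s Z L n :
  take L s = restr Z L ->
  (forall i, i <= n -> witnessed_below (haltS s i) L /\ witnessed_below (haltZ Z i) L) ->
  tS hf s n = tZ hz Z n.
Proof.
move=> sZ wit; rewrite tS_titer tZ_titer; apply: titer_eq => i /wit[wS wZ].
by apply: mu_opt_eq wS wZ => t; apply: haltS_haltZ.
Qed.

Lemma tS_restr Z L n : tZ hz Z n <= L -> tS hf (restr Z L) n = tZ hz Z n.
Proof.
move=> le_nL; apply: (@tS_eq_tZ _ _ L); first by rewrite take_restr minnn.
move=> i le_in; split; first by have := @haltS_witnessed (restr Z L) i; rewrite size_mkseq.
by apply: witnessed_below_le le_nL _; rewrite tZ_titer; apply: titer_witnessed.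
Qed.

Lemma Jfin_restr_tZ Z k :
  Jfin hf code (restr Z (tZ hz Z k)) = restr (calJ hz code Z) k.+1.
Proof.
set L := tZ hz Z k.
have tSE i : i <= k -> tS hf (restr Z L) i = tZ hz Z i.
  by move=> le_ik; apply/tS_restr/tZ_mono.
have JL : Jlen hf (restr Z L) = k.+1.
  apply: JlenE; rewrite size_mkseq; first by rewrite -[X in X < _]tSE //; apply: tS_lt.
  by move=> i; rewrite ltnS => le_ik; rewrite tSE //; apply: tZ_mono.
apply: (@eq_from_nth _ 0); first by rewrite size_Jfin JL size_mkseq.
rewrite size_Jfin JL => i lt_ik; rewrite nth_Jfin ?JL // tSE // take_restr.
by rewrite (minn_idPl (tZ_mono _ (lt_ik : i <= k))) nth_mkseq.
Qed.

Section JumpInverse.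

Hypothesis code_inj : injective code.
Variable sk : nat -> seq nat.
Variable X : nat -> nat.
Hypothesis Jfin_sk : forall k, Jfin hf code (sk k) = restr X k.

Lemma Jlen_sk k : Jlen hf (sk k) = k.
Proof. by rewrite -size_Jfin Jfin_sk size_mkseq. Qed.

Lemma code_take_sk i k : i < k -> code (take (tS hf (sk k) i) (sk k)) = X i.
Proof. by move=> lt_ik; rewrite -nth_Jfin ?Jlen_sk // Jfin_sk nth_mkseq. Qed.

Definition Jinv_chain (n : nat) : seq nat := take (tS hf (sk n.+1) n) (sk n.+1).

Lemma take_sk n k : n < k -> take (tS hf (sk k) n) (sk k) = Jinv_chain n.
Proof. by move=> lt_nk; apply: code_inj; rewrite !code_take_sk. Qed.

Lemma size_Jinv_chain n k : n < k -> size (Jinv_chain n) = tS hf (sk k) n.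
Proof. by move=> lt_nk; rewrite -(take_sk lt_nk) size_takel // tS_le_size ?Jlen_sk. Qed.

Lemma Jinv_chain_prefix m n : m <= n -> prefix (Jinv_chain m) (Jinv_chain n).
Proof.
move=> le_mn; rewrite -(@take_sk m n.+1) // -(@take_sk n n.+1) //.
by rewrite -(take_takel _ (tS_mono _ le_mn)) prefix_take.
Qed.

Lemma Jinv_chain_size n : n < size (Jinv_chain n).
Proof. by rewrite (size_Jinv_chain (ltnSn n)) ltnW // tS_gt. Qed.

Definition Jinv : nat -> nat := chain_limit Jinv_chain.

Lemma restr_Jinv n L : L <= size (Jinv_chain n) -> restr Jinv L = take L (Jinv_chain n).
Proof. exact: restr_chain_limit Jinv_chain_prefix Jinv_chain_size n L. Qed.

Lemma restr_Jinv_take k : restr Jinv k = take k (sk k.+1).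
Proof.
rewrite (@restr_Jinv k) ?(ltnW (Jinv_chain_size k)) // take_takel //.
exact: leq_trans (leqnSn k) (ltnW (tS_gt hf _ k)).
Qed.

(* Comparing with [sk j.+1] for [j] past [n] and past [tZ Jinv n]: there both
   halting searches up to stage [n] are witnessed below [tS (sk j.+1) j]. *)
Lemma tZ_Jinv n : tZ hz Jinv n = size (Jinv_chain n).
Proof.
set j := maxn n (tZ hz Jinv n); set s := sk j.+1.
have le_nj : n <= j := leq_maxl _ _.
have lt_tZ : tZ hz Jinv n < tS hf s j.
  exact: leq_ltn_trans (leq_maxr n _) (ltnW (tS_gt hf s j)).
rewrite (@size_Jinv_chain n j.+1) ?ltnS //; symmetry; apply: (@tS_eq_tZ _ _ (tS hf s j)).
  by rewrite [LHS]take_sk // -(size_Jinv_chain (ltnSn j)) (@restr_Jinv j) // take_size.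
move=> i le_in; split.
  by apply: witnessed_below_le (tS_mono _ le_nj) _; rewrite tS_titer; apply: titer_witnessed.
by apply: witnessed_below_le (ltnW lt_tZ) _; rewrite tZ_titer; apply: titer_witnessed.
Qed.

Lemma calJ_Jinv : calJ hz code Jinv =1 X.
Proof. by move=> n; rewrite /calJ tZ_Jinv (@restr_Jinv n) // take_size; apply: code_take_sk. Qed.

End JumpInverse.
End UsePrinciple.
End Jumps.

Theorem lemma4p9
  (hf : nat -> seq nat -> nat -> nat -> bool)
  (hz : nat -> (nat -> nat) -> nat -> nat -> bool)
  (code : seq nat -> nat)
  (code_inj : injective code)
  (code_mono : forall s t : seq nat, sprefix s t -> code s < code t)
  (use_principle : forall (e : nat) (Z : nat -> nat) (k n : nat),
      hz e Z k n = hf e (restr Z k) k n)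
  (T : seq nat -> Prop) (hT : is_tree T) :
  forall X : nat -> nat,
    paths (JT hf code T) X <-> exists Z, paths T Z /\ X = calJ hz code Z.
Proof.
move=> X; split => [JT_X | [Z [TZ ->]] [|k]].
- have [sk sk_spec] : exists sk, forall k, T (sk k) /\ Jfin hf code (sk k) = restr X k.
    apply: (choice (fun k s => T s /\ Jfin hf code s = restr X k)) => k.
    by have [s [Ts ->]] := JT_X k; exists s.
  have Jfin_sk k : Jfin hf code (sk k) = restr X k := (sk_spec k).2.
  exists (Jinv hf sk); split.
    by move=> k; rewrite (restr_Jinv_take code_inj Jfin_sk); apply: hT; apply: (sk_spec _).1.
  by apply: functional_extensionality => n; rewrite (calJ_Jinv use_principle code_inj Jfin_sk).
- by exists [::]; split; [apply: TZ 0 | rewrite Jfin_nil].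
- by exists (restr Z (tZ hz Z k)); split; [apply: TZ | rewrite Jfin_restr_tZ].
Qed.
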